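(* Let $\sigma > -2$ and $p < -1-\sigma$, and set $a = \frac{\sigma+2}{1-p} \in (0,1)$, $c_a = \big(a(1-a)\big)^{1/(p-1)}$, $u_a(x) = c_a x^a$. Then there is no positive solution $u \in C^2(0,+\infty)$ of \[ u''(x) + x^\sigma u(x)^p = 0 \quad \text{for all } x>0 \] satisfying $u(x) < u_a(x)$ for all $x>0$. In particular, for every $\alpha<0$, the local solution $u^\alpha := u_a(1+w)$ cannot be extended to a positive solution on all of $(0,+\infty)$, where $w$ is the local solution near $x=0$ of \[ x(xw')' + (2a-1)x w' + a(1-a)(p-1) w + a(1-a)\big[(1+w)^p - 1 - p w\big] = 0 \] with $\lim_{x\searrow0} w(x)/x^{\mu_+} = \alpha$, and $\mu_+>0$ is the positive root of $\mu^2 + (2a-1)\mu + a(1-a)(p-1) = 0$.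
   Context: Note $c_a^{p-1} = a(1-a)$, and $u_a$ is a positive solution of the equation. For $u = u_a(1+w)$, the equation for $u$ on $(0,T)$ is equivalent to the stated equation for $w$; a unique local solution $w\in C[0,T]\cap C^2(0,T)$ with the prescribed asymptotics $\lim_{x\searrow 0}w(x)/x^{\mu_+}=\alpha$ exists for some $T>0$. *)

From Stdlib Require Import Reals.
From Coquelicot Require Import Coquelicot.
Open Scope R_scope.

Definition C2_pos (u : R -> R) : Prop :=
  forall x, 0 < x ->
    ex_derive u x /\ ex_derive (Derive u) x /\ continuous (Derive (Derive u)) x.

Definition pos_sol (sigma p : R) (u : R -> R) : Prop :=
  C2_pos u /\
  (forall x, 0 < x -> 0 < u x) /\
  (forall x, 0 < x -> Derive (Derive u) x + Rpower x sigma * Rpower (u x) p = 0).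

Definition exp_a (sigma p : R) : R := (sigma + 2) / (1 - p).
Definition c_a (sigma p : R) : R :=
  let a := exp_a sigma p in Rpower (a * (1 - a)) (1 / (p - 1)).
Definition u_a (sigma p : R) (x : R) : R := c_a sigma p * Rpower x (exp_a sigma p).

From Stdlib Require Import Reals Lra Psatz.
From Coquelicot Require Import Coquelicot.
Open Scope R_scope.

(* With a = exp_a sigma p, the Emden-Fowler change of variables v(t) = e^(-a t) u(e^t) turns
   u'' + x^sigma u^p = 0 into the autonomous damped equation
   v'' + (2a - 1) v' = - (v^p - c^(p-1) v),  c = c_a sigma p,
   whose only positive equilibrium is v = c (the solution u_a), while concavity of u gives
   |v'| <= v.  Below c the right-hand side is negative, so e^((2a-1) t) v' decreases: once v
   is below c with v' < 0 it stays below c and keeps decreasing, the friction-corrected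
   momentum v' + (2a-1) v then forces v to become small, and a small v is concave, hence
   reaches 0 in finite time.  Both u < u_a (by reversing time if v increases) and the
   asymptotics u = u_a (1 + alpha x^mu + ...) with alpha < 0 (v approaches c from below as
   t -> -oo, so it must decrease somewhere) produce such a point. *)

Lemma Rpower_pos x y : 0 < Rpower x y.
Proof. exact (exp_pos _). Qed.

Lemma Rpower_exp t y : Rpower (exp t) y = exp (y * t).
Proof. unfold Rpower. now rewrite ln_exp. Qed.

Lemma Rpower_pred x y : 0 < x -> Rpower x y = x * Rpower x (y - 1).
Proof.
  intros Hx. replace y with (1 + (y - 1)) at 1 by ring.
  now rewrite Rpower_plus, Rpower_1.
Qed.

Lemma Rpower_inv_exp x y : 0 < x -> y <> 0 -> Rpower (Rpower x (1 / y)) y = x.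
Proof.
  intros Hx Hy. rewrite Rpower_mult.
  replace (1 / y * y) with 1 by (field; exact Hy).
  now apply Rpower_1.
Qed.

Lemma Rlt_Rpower_l_neg x y e : 0 < x < y -> e < 0 -> Rpower y e < Rpower x e.
Proof.
  intros Hxy He. apply exp_increasing.
  assert (ln x < ln y) by (apply ln_increasing; lra). nra.
Qed.

Lemma Rle_Rpower_l_neg x y e : 0 < x <= y -> e < 0 -> Rpower y e <= Rpower x e.
Proof.
  intros [Hx [Hxy | <-]] He; [| lra].
  left. now apply Rlt_Rpower_l_neg.
Qed.

Lemma is_derive_MVT (f df : R -> R) a b : a < b ->
  (forall x, a <= x <= b -> is_derive f x (df x)) ->
  exists x, a < x < b /\ f b - f a = df x * (b - a).
Proof.
  intros Hab Hf.
  destruct (MVT_cor2 f df a b Hab) as [x [Hx Hmvt]].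
  - intros x Hx. now apply is_derive_Reals, Hf.
  - now exists x.
Qed.

Lemma is_derive_neg_lt (f df : R -> R) a b : a < b ->
  (forall x, a <= x <= b -> is_derive f x (df x)) ->
  (forall x, a < x < b -> df x < 0) -> f b < f a.
Proof.
  intros Hab Hf Hneg.
  destruct (is_derive_MVT f df a b Hab Hf) as [x [Hx Hmvt]].
  specialize (Hneg x Hx). nra.
Qed.

Lemma is_derive_exp_mul (f : R -> R) b t l : is_derive f t l ->
  is_derive (fun s => exp (b * s) * f s) t (exp (b * t) * (l + b * f t)).
Proof.
  intros Hf.
  assert (He : is_derive (fun s => exp (b * s)) t (b * exp (b * t)))
    by (auto_derive; [easy | ring]).
  replace (exp (b * t) * (l + b * f t))
    with (plus (mult (b * exp (b * t)) (f t)) (mult (exp (b * t)) l))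
    by (unfold plus, mult; simpl; ring).
  apply (is_derive_mult _ _ t _ _ He Hf). intros; apply Rmult_comm.
Qed.

Lemma is_derive_comp_exp (f : R -> R) t l : is_derive f (exp t) l ->
  is_derive (fun s => f (exp s)) t (exp t * l).
Proof. intros Hf. apply (is_derive_comp f exp t); [exact Hf | apply is_derive_exp]. Qed.

Lemma is_derive_comp_opp (f : R -> R) t l : is_derive f (- t) l ->
  is_derive (fun s => f (- s)) t (- l).
Proof.
  intros Hf. replace (- l) with (scal (-1) l) by (unfold scal; simpl; unfold mult; simpl; ring).
  apply (is_derive_comp f Ropp t); [exact Hf | auto_derive; [easy | ring]].
Qed.

Lemma deriv_nonneg_of_pos_concave (f df : R -> R) s :
  (forall x, s <= x -> is_derive f x (df x)) ->
  (forall x, s < x -> df x < df s) ->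
  (forall x, s <= x -> 0 < f x) -> 0 <= df s.
Proof.
  intros Hf Hconc Hpos. destruct (Rle_lt_dec 0 (df s)) as [| Hneg]; [easy | exfalso].
  set (T := s + f s / - df s + 1).
  assert (0 < f s / - df s) by (apply Rdiv_lt_0_compat; [apply Hpos | ]; lra).
  destruct (is_derive_MVT f df s T) as [x [Hx Hmvt]]; [unfold T; lra | intros; apply Hf; lra |].
  assert (df x * (T - s) < df s * (T - s))
    by (apply Rmult_lt_compat_r; [unfold T; lra | apply Hconc; lra]).
  assert (df s * (T - s) = - f s + df s) by (unfold T; field; lra).
  pose proof (Hpos T ltac:(unfold T; lra)). lra.
Qed.

Lemma tangent_le_of_pos_concave (f df : R -> R) x : 0 < x ->
  (forall y, 0 < y <= x -> is_derive f y (df y)) ->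
  (forall y, 0 < y < x -> df x < df y) ->
  (forall y, 0 < y -> 0 < f y) -> x * df x <= f x.
Proof.
  intros Hx Hf Hconc Hpos. destruct (Rle_lt_dec (df x) 0) as [Hnpos | Hdpos].
  { pose proof (Hpos x Hx). nra. }
  apply Rle_plus_epsilon. intros eps Heps.
  set (e := Rmin (x / 2) (eps / df x)).
  assert (He : 0 < e) by (apply Rmin_glb_lt; [lra | now apply Rdiv_lt_0_compat]).
  assert (e <= x / 2) by apply Rmin_l.
  assert (e * df x <= eps).
  { replace eps with (eps / df x * df x) by (field; lra).
    apply Rmult_le_compat_r; [lra | apply Rmin_r]. }
  destruct (is_derive_MVT f df e x) as [y [Hy Hmvt]]; [lra | intros; apply Hf; lra |].
  assert (df x * (x - e) < df y * (x - e)) by (apply Rmult_lt_compat_r; [lra | apply Hconc; lra]).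
  pose proof (Hpos e He). nra.
Qed.

Lemma first_hit (f : R -> R) c a b : a <= b -> f a < c -> c <= f b ->
  (forall x, a <= x <= b -> continuous f x) ->
  exists tau, a < tau <= b /\ c <= f tau /\ forall x, a <= x < tau -> f x < c.
Proof.
  intros Hab Ha Hb Hcont.
  set (E x := a <= x <= b /\ forall y, a <= y <= x -> f y < c).
  destruct (completeness E) as [tau [Hub Hlub]].
  { exists b. intros x Hx. apply Hx. }
  { exists a. split; [lra | intros y Hy; now replace y with a by lra]. }
  assert (Hbefore : forall x, a <= x < tau -> f x < c).
  { intros x Hx. destruct (Rlt_le_dec (f x) c) as [| Hge]; [easy | exfalso].
    enough (tau <= x) by lra.
    apply Hlub. intros z [_ Hz]. destruct (Rle_lt_dec z x) as [| Hxz]; [easy |].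
    pose proof (Hz x ltac:(lra)). lra. }
  assert (Hat : a <= tau) by (apply Hub; split; [lra | intros y Hy; now replace y with a by lra]).
  assert (Htb : tau <= b) by (apply Hlub; intros x Hx; apply Hx).
  assert (Hhit : c <= f tau).
  { destruct (Rlt_le_dec (f tau) c) as [Hlt |]; [exfalso | easy].
    assert (Htb' : tau < b) by (destruct Htb as [| ->]; lra).
    pose proof (proj2 (continuity_pt_filterlim f tau) (Hcont tau (conj Hat Htb))) as Htau.
    rewrite continuity_pt_locally in Htau.
    destruct (Htau (mkposreal _ (proj2 (Rlt_0_minus _ _) Hlt))) as [d Hd]; simpl in Hd.
    set (ts := tau + Rmin (d / 2) ((b - tau) / 2)).
    assert (0 < Rmin (d / 2) ((b - tau) / 2)) by (apply Rmin_glb_lt; pose proof (cond_pos d); lra).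
    assert (Rmin (d / 2) ((b - tau) / 2) <= d / 2) by apply Rmin_l.
    assert (Rmin (d / 2) ((b - tau) / 2) <= (b - tau) / 2) by apply Rmin_r.
    enough (Hts : E ts) by (pose proof (Hub ts Hts); unfold ts in *; lra).
    split; [unfold ts; lra |]. intros y Hy.
    destruct (Rlt_le_dec y tau); [apply Hbefore; lra |].
    assert (Hball : Rabs (y - tau) < d) by (apply Rabs_def1; unfold ts in *; lra).
    pose proof (Hd y Hball) as Hclose. apply Rabs_def2 in Hclose. lra. }
  exists tau. split; [| easy]. split; [| easy].
  destruct Hat as [| <-]; lra.
Qed.

Definition fowler_force (p c x : R) : R := Rpower x p - Rpower c (p - 1) * x.

Lemma fowler_force_lower p c x y : p < 1 -> 0 < x <= y ->
  x * (Rpower y (p - 1) - Rpower c (p - 1)) <= fowler_force p c x.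
Proof.
  intros Hp Hxy. unfold fowler_force. rewrite (Rpower_pred x p) by lra.
  pose proof (Rle_Rpower_l_neg x y (p - 1) Hxy ltac:(lra)). nra.
Qed.

Lemma fowler_force_pos p c x : p < 1 -> 0 < x < c -> 0 < fowler_force p c x.
Proof.
  intros Hp Hx. eapply Rlt_le_trans; [| apply (fowler_force_lower p c x x); lra].
  pose proof (Rlt_Rpower_l_neg x c (p - 1) Hx ltac:(lra)). nra.
Qed.

Section DampedFowler.

Variables (p b c : R) (v v' : R -> R).
Hypothesis p_lt_1 : p < 1.
Hypothesis v_pos : forall t, 0 < v t.
Hypothesis v'_bound : forall t, Rabs (v' t) <= v t.
Hypothesis v_deriv : forall t, is_derive v t (v' t).
Hypothesis v'_deriv : forall t, is_derive v' t (- b * v' t - fowler_force p c (v t)).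

Lemma damped_deriv_lt s t : s < t -> (forall z, s < z < t -> v z < c) ->
  exp (b * t) * v' t < exp (b * s) * v' s.
Proof.
  intros Hst Hbelow.
  apply (is_derive_neg_lt (fun z => exp (b * z) * v' z)
           (fun z => - exp (b * z) * fowler_force p c (v z))); [easy | |].
  - intros z _. replace (- exp (b * z) * fowler_force p c (v z))
      with (exp (b * z) * ((- b * v' z - fowler_force p c (v z)) + b * v' z)) by ring.
    apply is_derive_exp_mul, v'_deriv.
  - intros z Hz. pose proof (exp_pos (b * z)).
    pose proof (fowler_force_pos p c (v z) p_lt_1 (conj (v_pos z) (Hbelow z Hz))). nra.
Qed.

Lemma deriv_neg_propagates s t : s <= t -> v' s < 0 ->
  (forall z, s < z < t -> v z < c) -> v' t < 0.
Proof.
  intros [Hst | <-] Hs Hbelow; [| easy].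
  pose proof (damped_deriv_lt s t Hst Hbelow).
  pose proof (exp_pos (b * s)). pose proof (exp_pos (b * t)). nra.
Qed.

Lemma is_derive_momentum t :
  is_derive (fun s => v' s + b * v s) t (- fowler_force p c (v t)).
Proof.
  replace (- fowler_force p c (v t))
    with (plus (- b * v' t - fowler_force p c (v t)) (scal b (v' t)))
    by (unfold plus, scal; simpl; unfold mult; simpl; ring).
  exact (is_derive_plus v' (fun s => b * v s) t _ _ (v'_deriv t)
           (is_derive_scal v t b _ (v_deriv t))).
Qed.

Section Decreasing.

Variable t0 : R.
Hypothesis v_t0 : v t0 < c.
Hypothesis v'_t0 : v' t0 < 0.

(* At the first time [v] could reach [c] again, [v'] would still be negative on the way. *)
Lemma below_and_decreasing t : t0 <= t -> v t < c /\ v' t < 0.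
Proof.
  intros Ht.
  assert (Hbelow : forall t, t0 <= t -> v t < c).
  { clear t Ht. intros t Ht. destruct (Rlt_le_dec (v t) c) as [| Hge]; [easy | exfalso].
    destruct (first_hit v c t0 t Ht v_t0 Hge) as [tau [Htau [Hhit Hbefore]]].
    { intros x _. apply (@ex_derive_continuous R_AbsRing R_NormedModule). now exists (v' x). }
    enough (v tau < v t0) by lra.
    apply (is_derive_neg_lt v v'); [lra | intros; apply v_deriv |].
    intros z Hz. apply (deriv_neg_propagates t0); [lra | easy |].
    intros w Hw. apply Hbefore. lra. }
  split; [now apply Hbelow |].
  apply (deriv_neg_propagates t0); [easy | easy |]. intros z Hz. apply Hbelow. lra.
Qed.

Lemma decreasing_after s t : t0 <= s -> s <= t -> v t <= v s.
Proof.
  intros Hs [Hst | <-]; [left | lra].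
  apply (is_derive_neg_lt v v'); [easy | intros; apply v_deriv |].
  intros z Hz. apply below_and_decreasing. lra.
Qed.

Lemma Rabs_momentum_le t : t0 <= t -> Rabs (v' t + b * v t) <= (1 + Rabs b) * v t0.
Proof.
  intros Ht. eapply Rle_trans; [apply Rabs_triang |].
  rewrite Rabs_mult, (Rabs_pos_eq (v t)) by (left; apply v_pos).
  pose proof (v'_bound t). pose proof (decreasing_after t0 t (Rle_refl _) Ht).
  pose proof (Rabs_pos b). nra.
Qed.

(* The momentum [v' + b v] has derivative [- fowler_force p c v], bounded away from 0 as
   long as [v >= eta], while the momentum itself stays bounded. *)
Lemma eventually_lt eta : 0 < eta -> exists t, t0 <= t /\ v t < eta.
Proof.
  intros Heta.
  set (D := Rpower (v t0) (p - 1) - Rpower c (p - 1)).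
  assert (HD : 0 < D).
  { pose proof (Rlt_Rpower_l_neg (v t0) c (p - 1) (conj (v_pos t0) v_t0)). unfold D. lra. }
  set (B := (1 + Rabs b) * v t0).
  assert (HB : 0 <= B).
  { pose proof (Rabs_momentum_le t0 (Rle_refl _)). pose proof (Rabs_pos (v' t0 + b * v t0)).
    unfold B. lra. }
  set (T := t0 + 2 * B / (eta * D) + 1).
  assert (0 <= 2 * B / (eta * D)) by (apply Rdiv_le_0_compat; nra).
  exists T. split; [unfold T; lra |].
  destruct (Rlt_le_dec (v T) eta) as [| Hge]; [easy | exfalso].
  destruct (is_derive_MVT _ _ t0 T ltac:(unfold T; lra) (fun x _ => is_derive_momentum x))
    as [z [Hz Hmvt]].
  assert (eta * D <= fowler_force p c (v z)).
  { pose proof (decreasing_after z T ltac:(lra) ltac:(lra)).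
    pose proof (fowler_force_lower p c (v z) (v t0) p_lt_1
                  (conj (v_pos z) (decreasing_after t0 z (Rle_refl _) ltac:(lra)))).
    assert (eta * D <= v z * D) by (apply Rmult_le_compat_r; lra).
    unfold D in *. lra. }
  assert (eta * D * (T - t0) = 2 * B + eta * D) by (unfold T; field; nra).
  pose proof (proj1 (Rabs_le_between _ _) (Rabs_momentum_le T ltac:(unfold T; lra))) as HBT.
  pose proof (proj1 (Rabs_le_between _ _) (Rabs_momentum_le t0 (Rle_refl _))) as HB0.
  fold B in HBT, HB0. nra.
Qed.

End Decreasing.

(* For small [v], [v^p] dominates both [c^(p-1) v] and the friction [b v'] (as [|v'| <= v]). *)
Lemma deriv2_neg_of_small t : v t < Rpower (Rpower c (p - 1) + Rabs b + 1) (1 / (p - 1)) ->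
  - b * v' t - fowler_force p c (v t) < 0.
Proof.
  intros Hsmall. set (K := Rpower c (p - 1) + Rabs b + 1).
  assert (HK : 0 < K)
    by (pose proof (Rpower_pos c (p - 1)); pose proof (Rabs_pos b); unfold K; lra).
  assert (K < Rpower (v t) (p - 1)).
  { rewrite <- (Rpower_inv_exp K (p - 1)) at 1 by lra.
    apply Rlt_Rpower_l_neg; [split; [apply v_pos | easy] | lra]. }
  assert (- b * v' t <= Rabs b * v t).
  { eapply Rle_trans; [apply Rle_abs |]. rewrite Rabs_mult, Rabs_Ropp.
    apply Rmult_le_compat_l; [apply Rabs_pos | apply v'_bound]. }
  unfold fowler_force. rewrite (Rpower_pred (v t) p) by apply v_pos.
  pose proof (v_pos t). unfold K in *. nra.
Qed.

Lemma no_decrease_below t0 : v t0 < c -> v' t0 < 0 -> False.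
Proof.
  intros Hv Hv'.
  destruct (eventually_lt t0 Hv Hv' (Rpower (Rpower c (p - 1) + Rabs b + 1) (1 / (p - 1))))
    as [t1 [Ht1 Hsmall]]; [apply Rpower_pos |].
  enough (0 <= v' t1) by (pose proof (below_and_decreasing t0 Hv Hv' t1 Ht1); lra).
  apply (deriv_nonneg_of_pos_concave v v'); [intros; apply v_deriv | | intros; apply v_pos].
  intros x Hx.
  apply (is_derive_neg_lt v' (fun t => - b * v' t - fowler_force p c (v t)) t1 x Hx);
    [intros; apply v'_deriv |].
  intros z Hz. apply deriv2_neg_of_small.
  pose proof (decreasing_after t0 Hv Hv' t1 z Ht1 ltac:(lra)). lra.
Qed.

Lemma no_approach_from_below :
  (exists T, forall t, t < T -> v t < c) ->
  (forall eps s, 0 < eps -> exists t, t < s /\ c - eps < v t) -> False.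
Proof.
  intros [T Hbelow] Happroach.
  assert (v (T - 1) < c) by (apply Hbelow; lra).
  destruct (Happroach (c - v (T - 1)) (T - 1)) as [s [Hs Hvs]]; [lra |].
  destruct (is_derive_MVT v v' s (T - 1) Hs (fun z _ => v_deriv z)) as [z [Hz Hmvt]].
  apply (no_decrease_below z); [apply Hbelow; lra | nra].
Qed.

End DampedFowler.

Lemma no_solution_below p b c (v v' : R -> R) : p < 1 ->
  (forall t, 0 < v t) -> (forall t, Rabs (v' t) <= v t) ->
  (forall t, is_derive v t (v' t)) ->
  (forall t, is_derive v' t (- b * v' t - fowler_force p c (v t))) ->
  (forall t, v t < c) -> False.
Proof.
  intros Hp Hpos Hbound Hv Hv' Hbelow.
  destruct (Rle_lt_dec (v' 0) 0) as [Hle | Hgt].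
  - apply (no_decrease_below p b c v v' Hp Hpos Hbound Hv Hv' 1 (Hbelow 1)).
    pose proof (damped_deriv_lt p b c v v' Hp Hpos Hv' 0 1 Rlt_0_1 (fun z _ => Hbelow z))
      as Hdamped.
    rewrite Rmult_0_r, exp_0 in Hdamped. pose proof (exp_pos (b * 1)). nra.
  - (* reversing time turns the increase of [v] at 0 into a decrease *)
    apply (no_decrease_below p (- b) c (fun t => v (- t)) (fun t => - v' (- t)) Hp
             (fun t => Hpos (- t))) with (t0 := 0).
    + intros t. rewrite Rabs_Ropp. apply Hbound.
    + intros t. apply is_derive_comp_opp, Hv.
    + intros t. cbv beta. replace (- - b * - v' (- t) - fowler_force p c (v (- t)))
        with (- - (- b * v' (- t) - fowler_force p c (v (- t)))) by ring.
      apply (is_derive_comp_opp (fun r => - v' r)), (is_derive_opp v'), Hv'.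
    + apply Hbelow.
    + rewrite Ropp_0. lra.
Qed.

Lemma exp_a_bounds sigma p : -2 < sigma -> p < -1 - sigma -> 0 < exp_a sigma p < 1.
Proof.
  intros Hs Hp. unfold exp_a. split.
  - apply Rdiv_lt_0_compat; lra.
  - apply (Rmult_lt_reg_r (1 - p)); [lra |]. field_simplify; lra.
Qed.

Lemma exp_a_mul sigma p : p <> 1 -> exp_a sigma p * (1 - p) = sigma + 2.
Proof. intros Hp. unfold exp_a. field. lra. Qed.

Lemma Rpower_c_a sigma p : -2 < sigma -> p < -1 - sigma ->
  Rpower (c_a sigma p) (p - 1) = exp_a sigma p * (1 - exp_a sigma p).
Proof.
  intros Hs Hp. pose proof (exp_a_bounds sigma p Hs Hp).
  unfold c_a. apply Rpower_inv_exp; nra.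
Qed.

Lemma u_a_exp sigma p t : u_a sigma p (exp t) = c_a sigma p * exp (exp_a sigma p * t).
Proof. unfold u_a. now rewrite Rpower_exp. Qed.

Lemma filterlim_at_right_0_eps (f : R -> R) l : filterlim f (at_right 0) (locally l) ->
  forall eps, 0 < eps -> exists d, 0 < d /\ forall x, 0 < x < d -> Rabs (f x - l) < eps.
Proof.
  intros Hlim eps Heps.
  destruct (proj1 (filterlim_locally f l) Hlim (mkposreal eps Heps)) as [d Hd].
  exists d. split; [apply cond_pos |]. intros x Hx. apply (Hd x); [| easy].
  unfold ball; simpl. unfold AbsRing_ball, abs, minus, plus, opp; simpl.
  rewrite Ropp_0, Rplus_0_r, Rabs_pos_eq; lra.
Qed.

Lemma lt_1_near_0 (f : R -> R) alpha mu : alpha < 0 ->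
  filterlim (fun x => (f x - 1) / Rpower x mu) (at_right 0) (locally alpha) ->
  exists d, 0 < d /\ forall x, 0 < x < d -> f x < 1.
Proof.
  intros Halpha Hlim.
  destruct (filterlim_at_right_0_eps _ _ Hlim (- alpha) ltac:(lra)) as [d [Hd Hnear]].
  exists d. split; [easy |]. intros x Hx.
  pose proof (Rabs_def2 _ _ (Hnear x Hx)). pose proof (Rpower_pos x mu).
  replace (f x) with (1 + (f x - 1) / Rpower x mu * Rpower x mu) by (field; lra).
  nra.
Qed.

Lemma approaches_1_at_0 (f : R -> R) alpha mu : 0 < mu ->
  filterlim (fun x => (f x - 1) / Rpower x mu) (at_right 0) (locally alpha) ->
  forall eps d, 0 < eps -> 0 < d -> exists x, 0 < x < d /\ 1 - eps < f x.
Proof.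
  intros Hmu Hlim eps d Heps Hd.
  destruct (filterlim_at_right_0_eps _ _ Hlim 1 Rlt_0_1) as [d0 [Hd0 Hnear]].
  set (r := eps / (Rabs alpha + 1)).
  assert (Hr : 0 < r) by (unfold r; pose proof (Rabs_pos alpha); apply Rdiv_lt_0_compat; lra).
  set (x := Rmin (Rmin d d0) (Rpower r (1 / mu)) / 2).
  assert (Hx : 0 < x < Rmin (Rmin d d0) (Rpower r (1 / mu))).
  { pose proof (Rpower_pos r (1 / mu)).
    assert (0 < Rmin (Rmin d d0) (Rpower r (1 / mu))) by (repeat apply Rmin_glb_lt; lra).
    unfold x. lra. }
  pose proof (Rmin_l (Rmin d d0) (Rpower r (1 / mu))).
  pose proof (Rmin_r (Rmin d d0) (Rpower r (1 / mu))).
  pose proof (Rmin_l d d0). pose proof (Rmin_r d d0).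
  exists x. split; [lra |].
  assert (Hsmall : Rpower x mu < r).
  { rewrite <- (Rpower_inv_exp r mu) by lra. apply Rlt_Rpower_l; lra. }
  pose proof (Rpower_pos x mu).
  assert (Hrate : (Rabs alpha + 1) * Rpower x mu < eps).
  { replace eps with ((Rabs alpha + 1) * r) by (unfold r; field; pose proof (Rabs_pos alpha); lra).
    apply Rmult_lt_compat_l; [pose proof (Rabs_pos alpha) |]; lra. }
  replace (f x) with (1 + (f x - 1) / Rpower x mu * Rpower x mu) by (field; lra).
  assert (Hq : - (Rabs alpha + 1) < (f x - 1) / Rpower x mu).
  { pose proof (Rabs_def2 _ _ (Hnear x ltac:(lra))). pose proof (Rle_abs (- alpha)).
    rewrite Rabs_Ropp in *. lra. }
  nra.
Qed.

Definition emden_fowler (a : R) (u : R -> R) (t : R) : R := exp (- a * t) * u (exp t).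

Definition emden_fowler_deriv (a : R) (u : R -> R) (t : R) : R :=
  exp ((1 - a) * t) * Derive u (exp t) - a * emden_fowler a u t.

Section PositiveSolution.

Variables (sigma p : R) (u : R -> R).
Hypothesis u_sol : pos_sol sigma p u.

Lemma pos_sol_is_derive x : 0 < x -> is_derive u x (Derive u x).
Proof. intros Hx. apply Derive_correct, u_sol, Hx. Qed.

Lemma pos_sol_is_derive2 x : 0 < x -> is_derive (Derive u) x (Derive (Derive u) x).
Proof. intros Hx. apply Derive_correct, u_sol, Hx. Qed.

Lemma pos_sol_deriv_lt s t : 0 < s < t -> Derive u t < Derive u s.
Proof.
  intros Hst. apply (is_derive_neg_lt _ (Derive (Derive u))); [lra | |].
  - intros x Hx. apply pos_sol_is_derive2. lra.
  - intros x Hx. destruct u_sol as [_ [Hpos Heq]].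
    pose proof (Heq x ltac:(lra)).
    pose proof (Rmult_lt_0_compat _ _ (Rpower_pos x sigma) (Rpower_pos (u x) p)). lra.
Qed.

Lemma pos_sol_deriv_nonneg x : 0 < x -> 0 <= Derive u x.
Proof.
  intros Hx. apply (deriv_nonneg_of_pos_concave u (Derive u) x).
  - intros y Hy. apply pos_sol_is_derive. lra.
  - intros y Hy. apply pos_sol_deriv_lt. lra.
  - intros y Hy. apply u_sol. lra.
Qed.

Lemma pos_sol_tangent_le x : 0 < x -> x * Derive u x <= u x.
Proof.
  intros Hx. apply tangent_le_of_pos_concave; [easy | | | apply u_sol].
  - intros y Hy. apply pos_sol_is_derive. lra.
  - intros y Hy. apply pos_sol_deriv_lt. lra.
Qed.

Lemma emden_fowler_pos a t : 0 < emden_fowler a u t.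
Proof. apply Rmult_lt_0_compat; [apply exp_pos | apply u_sol, exp_pos]. Qed.

Lemma emden_fowler_exp a t : u (exp t) = exp (a * t) * emden_fowler a u t.
Proof.
  unfold emden_fowler. rewrite <- Rmult_assoc, <- exp_plus.
  replace (a * t + - a * t) with 0 by ring. rewrite exp_0. ring.
Qed.

Lemma emden_fowler_deriv_exp a t :
  emden_fowler_deriv a u t = exp (- a * t) * (exp t * Derive u (exp t) - a * u (exp t)).
Proof.
  unfold emden_fowler_deriv, emden_fowler.
  replace ((1 - a) * t) with (- a * t + t) by ring. rewrite exp_plus. ring.
Qed.

Lemma is_derive_emden_fowler a t : is_derive (emden_fowler a u) t (emden_fowler_deriv a u t).
Proof.
  rewrite emden_fowler_deriv_exp.
  replace (exp (- a * t) * (exp t * Derive u (exp t) - a * u (exp t)))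
    with (exp (- a * t) * (exp t * Derive u (exp t) + - a * u (exp t))) by ring.
  apply (is_derive_exp_mul (fun s => u (exp s))), is_derive_comp_exp, pos_sol_is_derive, exp_pos.
Qed.

(* [0 <= x u' <= u] bounds [x u' - a u] by [u] for [0 <= a <= 1]. *)
Lemma Rabs_emden_fowler_deriv_le a t : 0 <= a <= 1 ->
  Rabs (emden_fowler_deriv a u t) <= emden_fowler a u t.
Proof.
  intros Ha. rewrite emden_fowler_deriv_exp. unfold emden_fowler.
  pose proof (pos_sol_deriv_nonneg (exp t) (exp_pos t)).
  pose proof (pos_sol_tangent_le (exp t) (exp_pos t)).
  pose proof (exp_pos t). pose proof (exp_pos (- a * t)).
  pose proof (proj1 (proj2 u_sol) (exp t) (exp_pos t)).
  rewrite Rabs_mult, Rabs_pos_eq by lra.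
  apply Rmult_le_compat_l; [lra |]. apply Rabs_le. nra.
Qed.

(* The exponent of [exp t] in the transformed equation is [2 + sigma - a (1 - p)], which
   vanishes exactly for [a = exp_a sigma p]: that is what makes the equation autonomous. *)
Lemma is_derive_emden_fowler_deriv a t : a * (1 - p) = sigma + 2 ->
  is_derive (emden_fowler_deriv a u) t
    ((1 - 2 * a) * emden_fowler_deriv a u t + a * (1 - a) * emden_fowler a u t
     - Rpower (emden_fowler a u t) p).
Proof.
  intros Ha. set (v := emden_fowler a u t).
  assert (Hforce : exp ((1 - a) * t) * (exp t * Derive (Derive u) (exp t)) = - Rpower v p).
  { destruct u_sol as [_ [_ Heq]]. specialize (Heq (exp t) (exp_pos t)).
    rewrite (emden_fowler_exp a t), <- Rpower_mult_distr, !Rpower_exp in Heq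
      by (apply exp_pos || apply emden_fowler_pos).
    fold v in Heq.
    assert (Hzero : exp ((1 - a) * t) * exp t * exp (sigma * t) * exp (p * (a * t)) = 1).
    { rewrite <- !exp_plus.
      replace ((1 - a) * t + t + sigma * t + p * (a * t)) with ((sigma + 2 - a * (1 - p)) * t)
        by ring.
      rewrite Ha, Rminus_diag, Rmult_0_l. apply exp_0. }
    replace (Derive (Derive u) (exp t))
      with (- (exp (sigma * t) * (exp (p * (a * t)) * Rpower v p))) by lra.
    transitivity (- (exp ((1 - a) * t) * exp t * exp (sigma * t) * exp (p * (a * t))) * Rpower v p);
      [ring | rewrite Hzero; ring]. }
  apply (is_derive_ext (fun s => exp ((1 - a) * s) * Derive u (exp s) - a * emden_fowler a u s));
    [easy |].
  replace ((1 - 2 * a) * emden_fowler_deriv a u t + a * (1 - a) * v - Rpower v p)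
    with (minus (exp ((1 - a) * t)
                   * (exp t * Derive (Derive u) (exp t) + (1 - a) * Derive u (exp t)))
                (scal a (emden_fowler_deriv a u t)))
    by (unfold minus, plus, opp, scal; simpl; unfold mult; simpl;
        unfold emden_fowler_deriv; fold v; nra).
  apply (is_derive_minus (fun s => exp ((1 - a) * s) * Derive u (exp s))
           (fun s => a * emden_fowler a u s)).
  - apply (is_derive_exp_mul (fun s => Derive u (exp s))), is_derive_comp_exp, pos_sol_is_derive2,
      exp_pos.
  - apply (is_derive_scal (emden_fowler a u)), is_derive_emden_fowler.
Qed.

Hypothesis sigma_gt : -2 < sigma.
Hypothesis p_lt : p < -1 - sigma.

Let a := exp_a sigma p.
Let c := c_a sigma p.

Lemma emden_fowler_autonomous t :
  is_derive (emden_fowler_deriv a u) t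
    (- (2 * a - 1) * emden_fowler_deriv a u t - fowler_force p c (emden_fowler a u t)).
Proof.
  replace (- (2 * a - 1) * emden_fowler_deriv a u t - fowler_force p c (emden_fowler a u t))
    with ((1 - 2 * a) * emden_fowler_deriv a u t + a * (1 - a) * emden_fowler a u t
          - Rpower (emden_fowler a u t) p)
    by (unfold fowler_force, c, a; rewrite Rpower_c_a by easy; ring).
  apply is_derive_emden_fowler_deriv, exp_a_mul. lra.
Qed.

Lemma emden_fowler_ratio t : emden_fowler a u t = c * (u (exp t) / u_a sigma p (exp t)).
Proof.
  rewrite u_a_exp. unfold emden_fowler. fold a c.
  replace (- a * t) with (- (a * t)) by ring. rewrite exp_Ropp.
  field. split; apply Rgt_not_eq; [apply exp_pos | apply Rpower_pos].
Qed.

Lemma emden_fowler_solves_damped_fowler :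
  p < 1 /\ (forall t, 0 < emden_fowler a u t) /\
  (forall t, Rabs (emden_fowler_deriv a u t) <= emden_fowler a u t) /\
  (forall t, is_derive (emden_fowler a u) t (emden_fowler_deriv a u t)) /\
  (forall t, is_derive (emden_fowler_deriv a u) t
     (- (2 * a - 1) * emden_fowler_deriv a u t - fowler_force p c (emden_fowler a u t))).
Proof.
  assert (Ha : 0 < a < 1) by (apply exp_a_bounds; assumption).
  split; [| split; [| split; [| split]]].
  - lra.
  - apply emden_fowler_pos.
  - intros t. apply Rabs_emden_fowler_deriv_le. lra.
  - apply is_derive_emden_fowler.
  - apply emden_fowler_autonomous.
Qed.

Lemma pos_sol_not_below_u_a : ~ (forall x, 0 < x -> u x < u_a sigma p x).
Proof.
  intros Hbelow.
  destruct emden_fowler_solves_damped_fowler as (Hp & Hpos & Hbound & Hv & Hv').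
  apply (no_solution_below p (2 * a - 1) c _ _ Hp Hpos Hbound Hv Hv').
  intros t. rewrite emden_fowler_ratio.
  assert (Hua : 0 < u_a sigma p (exp t)) by (apply Rmult_lt_0_compat; apply Rpower_pos).
  assert (u (exp t) / u_a sigma p (exp t) < 1).
  { apply (Rlt_div_l _ _ _ Hua). rewrite Rmult_1_l. apply Hbelow, exp_pos. }
  assert (Hc : 0 < c) by apply Rpower_pos. nra.
Qed.

Lemma pos_sol_not_asymptotic alpha mu : alpha < 0 -> 0 < mu ->
  ~ filterlim (fun x => (u x / u_a sigma p x - 1) / Rpower x mu) (at_right 0) (locally alpha).
Proof.
  intros Halpha Hmu Hlim.
  destruct emden_fowler_solves_damped_fowler as (Hp & Hpos & Hbound & Hv & Hv').
  assert (Hc : 0 < c) by apply Rpower_pos.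
  apply (no_approach_from_below p (2 * a - 1) c _ _ Hp Hpos Hbound Hv Hv').
  - destruct (lt_1_near_0 (fun x => u x / u_a sigma p x) alpha mu Halpha Hlim) as [d [Hd Hnear]].
    exists (ln d). intros t Ht. rewrite emden_fowler_ratio.
    enough (u (exp t) / u_a sigma p (exp t) < 1) by nra.
    apply Hnear. split; [apply exp_pos |].
    rewrite <- (exp_ln d Hd). now apply exp_increasing.
  - intros eps s Heps.
    destruct (approaches_1_at_0 (fun x => u x / u_a sigma p x) alpha mu Hmu Hlim (eps / c) (exp s))
      as [x [Hx Hclose]]; [now apply Rdiv_lt_0_compat | apply exp_pos |].
    exists (ln x). split.
    + rewrite <- (ln_exp s). apply ln_increasing; lra.
    + rewrite emden_fowler_ratio, exp_ln by lra.
      replace (c - eps) with (c * (1 - eps / c)) by (field; lra).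
      now apply Rmult_lt_compat_l.
Qed.

End PositiveSolution.

Theorem theorem5p11 (sigma p : R) (Hsigma : -2 < sigma) (Hp : p < -1 - sigma) :
  (~ exists u : R -> R,
       pos_sol sigma p u /\ (forall x, 0 < x -> u x < u_a sigma p x)) /\
  (forall (alpha mu : R), alpha < 0 -> 0 < mu ->
     let a := exp_a sigma p in
     mu ^ 2 + (2 * a - 1) * mu + a * (1 - a) * (p - 1) = 0 ->
     ~ exists u : R -> R,
         pos_sol sigma p u /\
         filterlim (fun x => (u x / u_a sigma p x - 1) / Rpower x mu)
                   (at_right 0) (locally alpha)).
Proof.
  split.
  - intros [u [Hsol Hbelow]].
    exact (pos_sol_not_below_u_a sigma p u Hsol Hsigma Hp Hbelow).
  - (* only [0 < mu] matters, not that [mu] is the characteristic root *)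
    intros alpha mu Halpha Hmu a _ [u [Hsol Hlim]].
    exact (pos_sol_not_asymptotic sigma p u Hsol Hsigma Hp alpha mu Halpha Hmu Hlim).
Qed.
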